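(* Let $n\ge1$ and let $k_1\le k_2\le\cdots\le k_n$ be integers. Then $$\sum_{A} (-1)^{\#\{\text{special little triangles in }A\}+\#\{\text{entries of }A\text{ decorated with }\nwarrow\nearrow\}} \;=\; \sum_{G} 2^{r(G)},$$ where the left sum is over all arrowed Gelfand–Tsetlin patterns $A$ with bottom row $k_1,\ldots,k_n$, and the right sum is over all (undecorated) Gelfand–Tsetlin patterns $G$ with bottom row $k_1,\ldots,k_n$ such that no row other than the bottom row contains three equal entries; here $r(G)$ is the number of entries of $G$ that are not equal to both their $\nwarrow$-neighbor and their $\nearrow$-neighbor.
   Context: A Gelfand–Tsetlin pattern with $n$ rows is a triangular array of integers $(a_{i,j})_{1\le j\le i\le n}$, row $i$ being $a_{i,1},\ldots,a_{i,i}$, drawn so that $a_{i-1,j}$ sits between $a_{i,j}$ and $a_{i,j+1}$, satisfying $a_{i+1,j}\le a_{i,j}\le a_{i+1,j+1}$ for all $1\le j\le i<n$. Row $n$ is the bottom row. For an entry $a_{i,j}$: its $\nwarrow$-neighbor is $a_{i-1,j-1}$ and its $\nearrow$-neighbor is $a_{i-1,j}$ (when they exist; an entry lacking one of these neighbors is in particular not equal to both), its $\swarrow$-neighbor is $a_{i+1,j}$ and its $\searrow$-neighbor is $a_{i+1,j+1}$, and its left/right neighbors are $a_{i,j-1}$, $a_{i,j+1}$. An arrowed Gelfand–Tsetlin pattern is a Gelfand–Tsetlin pattern in which each entry either carries no decoration or carries exactly one decoration from $\{\nwarrow,\nearrow,\nwarrow\nearrow\}$ (the last one is called the double arrow), subject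 to: if an entry $a$ equals its $\nearrow$-neighbor and is decorated with $\nearrow$ or $\nwarrow\nearrow$, then the entry to the right of $a$ in the same row also equals $a$ and is decorated with $\nwarrow$ or $\nwarrow\nearrow$; and if $a$ equals its $\nwarrow$-neighbor and is decorated with $\nwarrow$ or $\nwarrow\nearrow$, then the entry to the left of $a$ in the same row also equals $a$ and is decorated with $\nearrow$ or $\nwarrow\nearrow$. A special little triangle is an entry $a$ that equals both its $\swarrow$-neighbor $b$ and its $\searrow$-neighbor $c$, where $b$ is decorated with $\nearrow$ or $\nwarrow\nearrow$ and $c$ is decorated with $\nwarrow$ or $\nwarrow\nearrow$. *)

From mathcomp Require Import all_boot all_order all_algebra.
Set Implicit Arguments. Unset Strict Implicit. Unset Printing Implicit Defensive.
Import Order.TTheory GRing.Theory Num.Theory.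
Local Open Scope ring_scope.

(* A (possibly decorated) triangular array is stored as the list of its rows,
   row i (1-based) being the (i-1)-th element, of length i.
   Entry a_{i,j} (1-based indices) is [ent x0 A i j]. *)
Definition ent {T : Type} (x0 : T) (A : seq (seq T)) (i j : nat) : T :=
  nth x0 (nth [::] A i.-1) j.-1.

(* Decorations: a pair of booleans (has_nw, has_ne).
   (false,false) = no decoration, (true,false) = NW arrow,
   (false,true) = NE arrow, (true,true) = double arrow. *)
Definition deco := (bool * bool)%type.
Definition all_decos : seq deco :=
  [:: (false, false); (true, false); (false, true); (true, true)].

Definition tri_shape {T : Type} (n : nat) (A : seq (seq T)) : bool :=
  (size A == n) && all (fun i => size (nth [::] A i.-1) == i) (iota 1 n).

Definition is_GT (n : nat) (k : seq int) (G : seq (seq int)) : bool :=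
  [&& tri_shape n G, nth [::] G n.-1 == k &
      all (fun i => all (fun j =>
         (ent (0:int) G i.+1 j <= ent (0:int) G i j) && (ent (0:int) G i j <= ent (0:int) G i.+1 j.+1))
        (iota 1 i)) (iota 1 n.-1)].

Definition vals (A : seq (seq (int * deco))) : seq (seq int) := map (map fst) A.
Definition dec (A : seq (seq (int * deco))) (i j : nat) : deco := snd (
  ent ((0 : int), (false, false)) A i j).
Definition val (A : seq (seq (int * deco))) (i j : nat) : int := ent (0:int) (vals A) i j.

Definition is_arrowed_GT (n : nat) (k : seq int) (A : seq (seq (int * deco))) : bool :=
  [&& tri_shape n A, is_GT n k (vals A) &
      all (fun i => all (fun j =>
        (* NE rule: a_{i,j} has a NE-neighbor a_{i-1,j} (i >= 2, j <= i-1) *)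
        [&& ((2 <= i)%N && (j <= i.-1)%N && (val A i j == val A i.-1 j)
              && (dec A i j).2)
            ==> ((val A i j.+1 == val A i j) && (dec A i j.+1).1) &
        (* NW rule: a_{i,j} has a NW-neighbor a_{i-1,j-1} (i >= 2, j >= 2) *)
            ((2 <= i)%N && (2 <= j)%N && (val A i j == val A i.-1 j.-1)
              && (dec A i j).1)
            ==> ((val A i j.-1 == val A i j) && (dec A i j.-1).2)])
        (iota 1 i)) (iota 1 n)].

Definition n_special (n : nat) (A : seq (seq (int * deco))) : nat :=
  \sum_(1 <= i < n) \sum_(1 <= j < i.+1)
    [&& val A i j == val A i.+1 j, val A i j == val A i.+1 j.+1,
        (dec A i.+1 j).2 & (dec A i.+1 j.+1).1].

Definition n_double (n : nat) (A : seq (seq (int * deco))) : nat :=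
  \sum_(1 <= i < n.+1) \sum_(1 <= j < i.+1) ((dec A i j).1 && (dec A i j).2).

Definition no_three_equal (n : nat) (G : seq (seq int)) : bool :=
  all (fun i => all (fun j1 => all (fun j2 => all (fun j3 =>
        ~~ [&& (j1 < j2)%N, (j2 < j3)%N,
               ent (0:int) G i j1 == ent (0:int) G i j2 & ent (0:int) G i j2 == ent (0:int) G i j3])
      (iota 1 i)) (iota 1 i)) (iota 1 i)) (iota 1 n.-1).

(* r(G): entries not equal to both their NW-neighbor and NE-neighbor
   (entries lacking one of these neighbors are counted). *)
Definition r_stat (n : nat) (G : seq (seq int)) : nat :=
  \sum_(1 <= i < n.+1) \sum_(1 <= j < i.+1)
    ~~ [&& (2 <= i)%N, (2 <= j)%N, (j <= i.-1)%N,
           ent (0:int) G i j == ent (0:int) G i.-1 j.-1 & ent (0:int) G i j == ent (0:int) G i.-1 j].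

Fixpoint rows_of {T : Type} (s : seq T) (m : nat) : seq (seq T) :=
  if m is m'.+1 then [seq x :: r | x <- s, r <- rows_of s m'] else [:: [::]].
Fixpoint tri_arrays {T : Type} (s : seq T) (m : nat) : seq (seq (seq T)) :=
  if m is m'.+1 then [seq rcons P r | P <- tri_arrays s m', r <- rows_of s m]
  else [:: [::]].

Definition int_range (lo hi : int) : seq int :=
  [seq lo + (m%:Z) | m <- iota 0 (`|hi - lo|%N.+1)].

(* All entries of a GT pattern with bottom row k lie between k_1 = head k and
   k_n = last k, so these enumerations contain every (arrowed) GT pattern with
   bottom row k, each exactly once. *)
Definition GT_candidates (n : nat) (k : seq int) : seq (seq (seq int)) :=
  tri_arrays (int_range (head 0 k) (last 0 k)) n.
Definition AGT_candidates (n : nat) (k : seq int) : seq (seq (seq (int * deco))) :=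
  tri_arrays [seq (x, d) | x <- int_range (head 0 k) (last 0 k), d <- all_decos] n.

From Pilot Require Import Defs.
From mathcomp Require Import all_boot all_order all_algebra.
From mathcomp Require Import ring zify.
Set Implicit Arguments. Unset Strict Implicit. Unset Printing Implicit Defensive.
Import Order.TTheory GRing.Theory Num.Theory.
Local Open Scope ring_scope.

(* Fix the entries of the pattern.  The arrow rules and the special little triangles of row i
   involve only the decorations of row i and the entries of rows i and i-1, so the signed sum
   over decorations is a product of one sum per row.  Within a row, the decorations are summed
   by a 2x2 transfer matrix driven by which entries equal their upper neighbours; in closed form
   the row contributes 2^(number of entries not equal to both upper neighbours), or 0 when two
   adjacent entries are equal to both, i.e. when the row above has three equal entries.  This
   closed form needs the row above to have no four equal entries, which holds as soon as the
   row above it has no three equal ones, and otherwise the product already vanishes. *)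

Lemma big_rows_ofS (R : nmodType) (T : Type) (s : seq T) m (F : seq T -> R) :
  \sum_(v <- rows_of s m.+1) F v = \sum_(x <- s) \sum_(r <- rows_of s m) F (x :: r).
Proof. exact: big_allpairs_dep. Qed.

Lemma size_rows_of (T : eqType) (s : seq T) m v : v \in rows_of s m -> size v = m.
Proof.
elim: m v => [|m IH] v /=; first by rewrite inE => /eqP ->.
by case/allpairsPdep => [x [r [_ r_in ->]]] /=; rewrite (IH _ r_in).
Qed.

Lemma big_tri_arraysS (R : nmodType) (T : Type) (s : seq T) n (F : seq (seq T) -> R) :
  \sum_(D <- tri_arrays s n.+1) F D =
  \sum_(P <- tri_arrays s n) \sum_(r <- rows_of s n.+1) F (rcons P r).
Proof. exact: big_allpairs_dep. Qed.

Lemma size_tri_arrays (T : eqType) (s : seq T) n D : D \in tri_arrays s n -> size D = n.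
Proof.
elim: n D => [|n IH] D /=; first by rewrite inE => /eqP ->.
by case/allpairsPdep => [P [r [P_in _ ->]]]; rewrite size_rcons (IH _ P_in).
Qed.

Lemma size_nth_tri_arrays (T : eqType) (s : seq T) n G : G \in tri_arrays s n ->
  forall i, size (nth [::] G i) = if (i < n)%N then i.+1 else 0%N.
Proof.
elim: n G => [|n IH] G /=; first by rewrite inE => /eqP -> i; rewrite nth_nil.
case/allpairsPdep => [P [r [P_in r_in ->]]] i.
rewrite nth_rcons (size_tri_arrays P_in); case: (ltngtP i n) => [i_lt | i_gt | ->].
- by rewrite (IH _ P_in) i_lt ltnS ltnW.
- by rewrite ltnS leqNgt i_gt.
- by rewrite ltnSn (@size_rows_of _ s n.+1 r r_in).
Qed.

Lemma ent_rcons (T : Type) (x0 : T) P r i :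
  (0 < i <= size P)%N -> ent x0 (rcons P r) i =1 ent x0 P i.
Proof. by move=> i_range j; rewrite /ent nth_rcons (_ : (i.-1 < size P)%N) //; lia. Qed.

Lemma ent_rcons_last (T : Type) (x0 : T) P r :
  ent x0 (rcons P r) (size P).+1 =1 fun j => nth x0 r j.-1.
Proof. by move=> j; rewrite /ent nth_rcons ltnn eqxx. Qed.

Lemma sum_count (T : Type) (a : pred T) (s : seq T) : (\sum_(x <- s) a x)%N = count a s.
Proof. by rewrite -sumn_count sumnE big_map. Qed.

Lemma iota1S n : iota 1 n.+1 = rcons (iota 1 n) n.+1.
Proof. by rewrite -cats1 -[n.+1]addn1 iotaD addnC. Qed.

(** * Transfer matrix along a row *)

Definition nodeco : deco := (false, false).
Definition is_double (d : deco) : bool := d.1 && d.2.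

(* The link between entries b_k, b_(k+1) of a row and the entry c_k above them is the pair
   (b_k == c_k, b_(k+1) == c_k). *)
Definition link := (bool * bool)%type.
Definition nolink : link := (false, false).

Definition link_ok (l : link) (d d' : deco) : bool :=
  (l.1 && d.2 ==> [&& l.1, l.2 & d'.1]) && (l.2 && d'.1 ==> [&& l.1, l.2 & d.2]).
Definition link_special (l : link) (d d' : deco) : bool := [&& l.1, l.2, d.2 & d'.1].

Fixpoint links_ok (ls : seq link) (v : seq deco) : bool :=
  match ls, v with
  | l :: ls', d :: v' => link_ok l d (head nodeco v') && links_ok ls' v'
  | _, _ => true
  end.

Fixpoint links_special (ls : seq link) (v : seq deco) : nat :=
  match ls, v with
  | l :: ls', d :: v' => (link_special l d (head nodeco v') + links_special ls' v')%N
  | _, _ => 0%N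
  end.

Definition links_weight (ls : seq link) (v : seq deco) : int :=
  if links_ok ls v then (-1) ^+ (links_special ls v + count is_double v) else 0.

Definition links_sum (phi : bool -> int) (ls : seq link) : int :=
  \sum_(v <- rows_of all_decos (size ls).+1) phi (head nodeco v).1 * links_weight ls v.

Definition transfer (l : link) (u : int * int) : int * int :=
  match l with
  | (false, false) => (2 * (u.1 + u.2), 0)
  | (true, false) => (u.1 + u.2, u.1 + u.2)
  | (false, true) => (2 * u.1, 0)
  | (true, true) => (u.1 - u.2, u.1 + u.2)
  end.

(* The components of [transfer_vec ls] sum the weights of the decorations whose first entry
   carries no NW arrow, resp. a NW arrow (lemma links_sumE). *)
Fixpoint transfer_vec (ls : seq link) : int * int :=
  if ls is l :: ls' then transfer l (transfer_vec ls') else (2, 0).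

Lemma links_sumE phi ls :
  links_sum phi ls = phi false * (transfer_vec ls).1 + phi true * (transfer_vec ls).2.
Proof.
elim: ls phi => [|l ls IH] phi.
  by rewrite /links_sum /links_weight unlock /= expr0 expr1; ring.
pose psi d x := if link_ok l d (x, false) then (-1) ^+ link_special l d (x, false) else 0 : int.
have split_head d : \sum_(r <- rows_of all_decos (size ls).+1)
     phi (head nodeco (d :: r)).1 * links_weight (l :: ls) (d :: r)
   = phi d.1 * (-1) ^+ is_double d * links_sum (psi d) ls.
  rewrite /links_sum big_distrr; apply: eq_bigr => r _.
  rewrite /links_weight /= /psi.
  (* the first link only sees the NW arrow of the second entry *)
  have -> : link_ok l d (head nodeco r) = link_ok l d ((head nodeco r).1, false) by [].
  have -> : link_special l d (head nodeco r) = link_special l d ((head nodeco r).1, false) by [].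
  case: link_ok => /=; last by rewrite !(mul0r, mulr0).
  case: links_ok => /=; last by rewrite !(mul0r, mulr0).
  rewrite !exprD; ring.
rewrite /links_sum big_rows_ofS -/(links_sum _ _).
under eq_bigr do rewrite split_head.
rewrite /all_decos !big_cons big_nil !IH /psi {split_head psi}.
case: l => [[] []] /=; case: (transfer_vec ls) => x y.
all: by rewrite /link_ok /link_special /= ?expr0 ?expr1; ring.
Qed.

(* Flags the entries equal to both upper neighbours; [w] tells whether the first entry equals
   its NW neighbour. *)
Fixpoint fulls (w : bool) (ls : seq link) : seq bool :=
  if ls is l :: ls' then (w && l.1) :: fulls l.2 ls' else [:: false].

Fixpoint no_two_adjacent (s : seq bool) : bool :=
  if s is x :: s' then ~~ (x && head false s') && no_two_adjacent s' else true.

Definition fulls_weight (s : seq bool) : int :=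
  if no_two_adjacent s then 2 ^+ count negb s else 0.

Lemma fulls_weight_cons x s : fulls_weight (x :: s) =
  if x then (if head false s then 0 else fulls_weight s) else 2 * fulls_weight s.
Proof.
by rewrite /fulls_weight /=; case: x; case: head; case: no_two_adjacent; rewrite /= ?exprS ?mulr0.
Qed.

Lemma head_fulls w ls : head false (fulls w ls) = w && (head nolink ls).1.
Proof. by case: ls => [|l ls] /=; rewrite ?andbF. Qed.

(* The first three links force b_1 = c_1 = b_2 = c_2 = b_3 = c_3. *)
Definition triple_start (ls : seq link) : bool :=
  if ls is l :: l' :: ls' then [&& l.1, l.2, l'.1, l'.2 & (head nolink ls').1] else false.

(* Fails only if four consecutive entries of the row above are equal. *)
Fixpoint no_quadruple (ls : seq link) : bool :=
  if ls is l :: ls' then ~~ (l.2 && triple_start ls') && no_quadruple ls' else true.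

Lemma transfer_vec2_eq0 ls : ~~ (head nolink ls).1 -> (transfer_vec ls).2 = 0.
Proof. by case: ls => [|[[] []] ls]. Qed.

Lemma transfer_vec_diag ls : (head nolink ls).1 -> ~~ triple_start ((true, true) :: ls) ->
  (transfer_vec ls).1 = (transfer_vec ls).2.
Proof.
case: ls => [|[[] e] ls] //= _; case: e => //= not_triple.
by rewrite transfer_vec2_eq0 // subr0 addr0.
Qed.

Lemma transfer_vec_closed ls : no_quadruple ls ->
  (transfer_vec ls).1 + (transfer_vec ls).2 = fulls_weight (fulls false ls) /\
  (~~ triple_start ls -> (transfer_vec ls).1 = fulls_weight (fulls true ls)).
Proof.
elim: ls => [|l ls IH] /=; first by rewrite /fulls_weight /= expr1 addr0.
case/andP=> no_quad /IH [sum_eq first_eq].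
rewrite !fulls_weight_cons head_fulls.
case: l no_quad => [[] []] /= no_quad.
- split=> [|not_triple]; first by rewrite (first_eq no_quad); ring.
  case head_ls: (head nolink ls).1.
    by rewrite transfer_vec_diag // subrr.
  by rewrite transfer_vec2_eq0 ?head_ls // subr0 first_eq.
- by rewrite sum_eq; split=> [|_]; ring.
- by rewrite (first_eq no_quad) addr0.
- by rewrite sum_eq addr0.
Qed.

Lemma links_sum_closed ls :
  no_quadruple ls -> links_sum (fun _ => 1) ls = fulls_weight (fulls false ls).
Proof. by move=> /transfer_vec_closed [<- _]; rewrite links_sumE !mul1r. Qed.

Lemma links_ok_nth ls v : size v = (size ls).+1 ->
  links_ok ls v =
  all (fun k => link_ok (nth nolink ls k) (nth nodeco v k) (nth nodeco v k.+1)) (iota 0 (size ls)).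
Proof.
elim: ls v => [|l ls IH] [|d v] //= [size_v].
by rewrite IH // -add1n iotaDl all_map; case: v size_v.
Qed.

Lemma links_special_nth ls v : size v = (size ls).+1 ->
  links_special ls v =
  (\sum_(0 <= k < size ls) link_special (nth nolink ls k) (nth nodeco v k) (nth nodeco v k.+1))%N.
Proof.
elim: ls v => [|l ls IH] [|d v] //= [size_v]; first by rewrite big_geq.
by rewrite big_nat_recl // IH.
Qed.

Lemma size_fulls w ls : size (fulls w ls) = (size ls).+1.
Proof. by elim: ls w => [|l ls IH] w //=; rewrite IH. Qed.

Lemma nth_fulls w ls p : nth false (fulls w ls) p =
  if p is p'.+1 then (nth nolink ls p').2 && (nth nolink ls p).1 else w && (nth nolink ls 0).1.
Proof.
elim: ls w p => [|l ls IH] w [|p] /=; rewrite ?andbF ?nth_nil //.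
by rewrite IH; case: p.
Qed.

Lemma no_two_adjacent_iota (f : nat -> bool) a n :
  no_two_adjacent [seq f j | j <- iota a n] = all (fun j => ~~ (f j && f j.+1)) (iota a n.-1).
Proof. by elim: n a => [|[|n] IH] a //=; rewrite ?andbF // -IH. Qed.

Lemma triple_start_nth ls : triple_start ls =
  [&& (nth nolink ls 0).1, (nth nolink ls 0).2, (nth nolink ls 1).1,
      (nth nolink ls 1).2 & (nth nolink ls 2).1].
Proof. by case: ls => [|l1 [|l2 [|l3 ls]]] /=; rewrite ?andbF. Qed.

Lemma no_quadruple_nth ls :
  (forall k, ~~ [&& (nth nolink ls k).2, (nth nolink ls k.+1).1, (nth nolink ls k.+1).2,
                    (nth nolink ls k.+2).1, (nth nolink ls k.+2).2 & (nth nolink ls k.+3).1]) ->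
  no_quadruple ls.
Proof.
elim: ls => [|l ls IH] no_run //=.
by rewrite triple_start_nth (no_run 0%N) IH // => k; apply: (no_run k.+1).
Qed.

(** * One row of a pattern *)

(* Row Vb of length m below the row Vc, columns indexed from 1, decorations Db; up to conversion
   these are the summands of is_arrowed_GT, n_special, n_double, r_stat and no_three_equal. *)
Definition row_ok (m : nat) (Vb Vc : nat -> int) (Db : nat -> deco) : bool :=
  all (fun j =>
    [&& ((2 <= m)%N && (j <= m.-1)%N && (Vb j == Vc j) && (Db j).2)
          ==> ((Vb j.+1 == Vb j) && (Db j.+1).1) &
        ((2 <= m)%N && (2 <= j)%N && (Vb j == Vc j.-1) && (Db j).1)
          ==> ((Vb j.-1 == Vb j) && (Db j.-1).2)]) (iota 1 m).

Definition row_special (m : nat) (Vb Vc : nat -> int) (Db : nat -> deco) : nat :=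
  \sum_(1 <= j < m) [&& Vc j == Vb j, Vc j == Vb j.+1, (Db j).2 & (Db j.+1).1].

Definition row_double (m : nat) (Db : nat -> deco) : nat := \sum_(1 <= j < m.+1) is_double (Db j).

Definition row_weight (m : nat) (Vb Vc : nat -> int) (Db : nat -> deco) : int :=
  if row_ok m Vb Vc Db then (-1) ^+ (row_special m Vb Vc Db + row_double m Db) else 0.

Definition row_full (m : nat) (Vb Vc : nat -> int) (j : nat) : bool :=
  [&& (2 <= m)%N, (2 <= j)%N, (j <= m.-1)%N, Vb j == Vc j.-1 & Vb j == Vc j].

Definition row_r (m : nat) (Vb Vc : nat -> int) : nat := \sum_(1 <= j < m.+1) ~~ row_full m Vb Vc j.

Definition no_triple (m : nat) (Vr : nat -> int) : bool :=
  all (fun j1 => all (fun j2 => all (fun j3 =>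
        ~~ [&& (j1 < j2)%N, (j2 < j3)%N, Vr j1 == Vr j2 & Vr j2 == Vr j3])
      (iota 1 m)) (iota 1 m)) (iota 1 m).

Definition links (m : nat) (Vb Vc : nat -> int) : seq link :=
  [seq (Vb k == Vc k, Vb k.+1 == Vc k) | k <- iota 1 m.-1].

Lemma size_links m Vb Vc : size (links m Vb Vc) = m.-1.
Proof. by rewrite size_map size_iota. Qed.

Lemma nth_links m Vb Vc k : (k < m.-1)%N ->
  nth nolink (links m Vb Vc) k = (Vb k.+1 == Vc k.+1, Vb k.+2 == Vc k.+1).
Proof. by move=> k_lt; rewrite (nth_map 0%N) ?size_iota // nth_iota. Qed.

Lemma row_ok_pairs m Vb Vc Db : row_ok m Vb Vc Db =
  all (fun k => ((Vb k == Vc k) && (Db k).2 ==> (Vb k.+1 == Vb k) && (Db k.+1).1) &&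
                ((Vb k.+1 == Vc k) && (Db k.+1).1 ==> (Vb k == Vb k.+1) && (Db k).2))
      (iota 1 m.-1).
Proof.
apply/allP/allP => [entries_ok k | pairs_ok j]; rewrite mem_iota => range.
  have m_ge2 : (2 <= m)%N by lia.
  have [k_in k1_in] : k \in iota 1 m /\ k.+1 \in iota 1 m by rewrite !mem_iota; lia.
  case/andP: (entries_ok k k_in) => + _; case/andP: (entries_ok k.+1 k1_in) => _.
  rewrite m_ge2 (_ : (k <= m.-1)%N) /=; last by lia.
  by rewrite ltnS (_ : (0 < k)%N) //= => [-> ->|]; lia.
apply/andP; split; apply/implyP => /andP[/andP[/andP[m_ge2 j_bound] eq_c] arrow].
  have j_in : j \in iota 1 m.-1 by rewrite mem_iota; lia.
  by case/andP: (pairs_ok j j_in); rewrite eq_c arrow.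
have j1_in : j.-1 \in iota 1 m.-1 by rewrite mem_iota; lia.
by case/andP: (pairs_ok j.-1 j1_in); rewrite prednK ?eq_c ?arrow //; lia.
Qed.

Lemma link_okE (x y z : int) (d d' : deco) : x <= y <= z ->
  link_ok (x == y, z == y) d d' =
  ((x == y) && d.2 ==> (z == x) && d'.1) && ((z == y) && d'.1 ==> (x == z) && d.2).
Proof.
move=> xyz; rewrite /link_ok /=.
have -> : (z == x) = (x == y) && (z == y) by lia.
have -> : (x == z) = (x == y) && (z == y) by lia.
by case: (x == y); case: (z == y); case: d.2; case: d'.1.
Qed.

Lemma no_triple_consecutive m (Vr : nat -> int) :
  (forall j, (0 < j < m)%N -> Vr j <= Vr j.+1) ->
  no_triple m Vr = all (fun j => Vr j != Vr j.+2) (iota 1 m.-2).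
Proof.
move=> step.
have mono : {in [pred j : nat | (0 < j <= m)%N] &, {homo Vr : i j / (i <= j)%N >-> i <= j}}.
  apply: homo_leq_in => [x | y x z | i j | i].
  - exact: lexx.
  - exact: le_trans.
  - by rewrite !inE => i_in j_in k ikj; rewrite inE; lia.
  - by rewrite !inE => i_in i1_in; apply: step; lia.
apply/allP/allP => [triple_free j | consecutive_free j1]; rewrite mem_iota => range.
  have [j_in j1_in j2_in] : [/\ j \in iota 1 m, j.+1 \in iota 1 m & j.+2 \in iota 1 m].
    by rewrite !mem_iota; split; lia.
  move/allP: (triple_free j j_in) => /(_ j.+1 j1_in) /allP /(_ j.+2 j2_in).
  by have := step j; have := step j.+1; lia.
apply/allP => j2 _; apply/allP => j3; rewrite mem_iota => range3.
apply/negP => /and4P[lt12 lt23 /eqP eq12 /eqP eq23].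
have j1_in : j1 \in iota 1 m.-2 by rewrite mem_iota; lia.
have := consecutive_free j1 j1_in.
by have := mono j1 j1.+1; have := mono j1.+1 j1.+2; have := mono j1.+2 j3; rewrite !inE; lia.
Qed.

Section Row.

Variables (m : nat) (Vb Vc : nat -> int).
Hypothesis m_gt0 : (0 < m)%N.
Hypothesis interlacing : forall k, (0 < k < m)%N -> Vb k <= Vc k <= Vb k.+1.

Lemma row_ok_links v : size v = m ->
  row_ok m Vb Vc (fun j => nth nodeco v j.-1) = links_ok (links m Vb Vc) v.
Proof.
move=> size_v; rewrite row_ok_pairs links_ok_nth size_links; last by rewrite size_v prednK.
rewrite -add1n iotaDl all_map; apply: eq_in_all => k; rewrite mem_iota /= => k_lt.
by rewrite nth_links // link_okE //; apply: interlacing; rewrite add0n in k_lt; lia.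
Qed.

Lemma row_special_links v : size v = m ->
  row_special m Vb Vc (fun j => nth nodeco v j.-1) = links_special (links m Vb Vc) v.
Proof.
move=> size_v; rewrite links_special_nth size_links; last by rewrite size_v prednK.
rewrite /row_special big_add1; apply: eq_big_nat => k /= k_lt.
by rewrite nth_links // /link_special /= !(eq_sym (Vc _)).
Qed.

Lemma row_double_count v : size v = m ->
  row_double m (fun j => nth nodeco v j.-1) = count is_double v.
Proof. by move=> size_v; rewrite -sum_count (big_nth nodeco) size_v /row_double big_add1. Qed.

Lemma fulls_links :
  fulls false (links m Vb Vc) = [seq row_full m Vb Vc j | j <- iota 1 m].
Proof.
apply: (@eq_from_nth _ false).
  by rewrite size_fulls size_links size_map size_iota prednK.
move=> p; rewrite size_fulls size_links prednK // => p_lt.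
rewrite nth_fulls (nth_map 0%N) ?size_iota // nth_iota // add1n.
case: p p_lt => [|p] p_lt /=; first by rewrite /row_full andbF.
rewrite nth_links /row_full /=; last by lia.
case: (ltnP p.+1 m.-1) => p_bound; first by rewrite nth_links //= (_ : (1 < m)%N) //; lia.
by rewrite nth_default ?size_links //= !andbF.
Qed.

Lemma row_r_fulls : row_r m Vb Vc = count negb (fulls false (links m Vb Vc)).
Proof. by rewrite fulls_links count_map /row_r sum_count /index_iota subSS subn0. Qed.

Lemma adjacent_fulls :
  all (fun j => ~~ (row_full m Vb Vc j && row_full m Vb Vc j.+1)) (iota 1 m.-1) =
  all (fun i => Vc i != Vc i.+2) (iota 1 m.-1.-2).
Proof.
apply/allP/allP => [adjacent_free i | consecutive_free j]; rewrite mem_iota => range.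
  have i1_in : i.+1 \in iota 1 m.-1 by rewrite mem_iota; lia.
  have := adjacent_free i.+1 i1_in; rewrite /row_full /=.
  by have := @interlacing i; have := @interlacing i.+1; have := @interlacing i.+2; lia.
apply/negP => /andP[/and5P[_ j_ge2 _ /eqP e1 /eqP e2] /and5P[_ _ j1_le /eqP e3 /eqP e4]].
have j_in : j.-1 \in iota 1 m.-1.-2 by rewrite mem_iota; lia.
move: e3 => /= e3; have := consecutive_free j.-1 j_in.
by rewrite prednK //; lia.
Qed.

Lemma no_triple_fulls : no_triple m.-1 Vc = no_two_adjacent (fulls false (links m Vb Vc)).
Proof.
rewrite fulls_links no_two_adjacent_iota adjacent_fulls no_triple_consecutive // => j range.
by have := @interlacing j; have := @interlacing j.+1; lia.
Qed.

Lemma no_quadruple_links : (forall k, (0 < k)%N -> (k.+3 < m)%N -> Vc k != Vc k.+3) ->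
  no_quadruple (links m Vb Vc).
Proof.
move=> no_run4; apply: no_quadruple_nth => k.
case: (ltnP k.+3 m.-1) => k_lt; last by rewrite [nth _ _ k.+3]nth_default ?size_links // !andbF.
have [k0_lt k1_lt k2_lt] : [/\ (k < m.-1)%N, (k.+1 < m.-1)%N & (k.+2 < m.-1)%N] by split; lia.
have k4_lt : (k.+4 < m)%N by lia.
by rewrite !nth_links //=; have := no_run4 k.+1 isT k4_lt; lia.
Qed.

Lemma sum_row_weight : (forall k, (0 < k)%N -> (k.+3 < m)%N -> Vc k != Vc k.+3) ->
  \sum_(v <- rows_of all_decos m) row_weight m Vb Vc (fun j => nth nodeco v j.-1)
  = if no_triple m.-1 Vc then 2 ^+ row_r m Vb Vc else 0.
Proof.
move=> no_run4; transitivity (links_sum (fun _ => 1) (links m Vb Vc)).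
  rewrite /links_sum size_links prednK // !big_seq; apply: eq_bigr => v /size_rows_of size_v.
  by rewrite mul1r /row_weight /links_weight row_ok_links // row_special_links // row_double_count.
by rewrite links_sum_closed ?no_quadruple_links // no_triple_fulls row_r_fulls.
Qed.

End Row.

(** * Factorisation over the rows *)

Definition arrows_ok (n : nat) (V : nat -> nat -> int) (Dd : nat -> nat -> deco) : bool :=
  all (fun i => row_ok i (V i) (V i.-1) (Dd i)) (iota 1 n).

Definition special_count (n : nat) (V : nat -> nat -> int) (Dd : nat -> nat -> deco) : nat :=
  \sum_(1 <= i < n) row_special i.+1 (V i.+1) (V i) (Dd i.+1).

Definition double_count (n : nat) (Dd : nat -> nat -> deco) : nat :=
  \sum_(1 <= i < n.+1) row_double i (Dd i).

Definition arrowed_weight (n : nat) (V : nat -> nat -> int) (Dd : nat -> nat -> deco) : int :=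
  if arrows_ok n V Dd then (-1) ^+ (special_count n V Dd + double_count n Dd) else 0.

Definition r_count (n : nat) (V : nat -> nat -> int) : nat :=
  \sum_(1 <= i < n.+1) row_r i (V i) (V i.-1).

Definition rows_no_triple (n : nat) (V : nat -> nat -> int) : bool :=
  all (fun i => no_triple i (V i)) (iota 1 n.-1).

Definition interlaced (n : nat) (V : nat -> nat -> int) : bool :=
  all (fun i => all (fun j => (V i.+1 j <= V i j) && (V i j <= V i.+1 j.+1)) (iota 1 i))
      (iota 1 n.-1).

Lemma interlacedP n V :
  reflect (forall i j, (0 < j < i)%N -> (i <= n)%N -> V i j <= V i.-1 j <= V i j.+1)
          (interlaced n V).
Proof.
apply: (iffP allP) => [rows_ok i j j_range i_le | interl i].
  have i_in : i.-1 \in iota 1 n.-1 by rewrite mem_iota; lia.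
  have j_in : j \in iota 1 i.-1 by rewrite mem_iota; lia.
  by move/allP: (rows_ok i.-1 i_in) => /(_ j j_in); rewrite prednK //; lia.
rewrite mem_iota => i_range; apply/allP => j; rewrite mem_iota => j_range.
by apply: (interl i.+1); lia.
Qed.

Lemma arrows_okS n V Dd :
  arrows_ok n.+1 V Dd = arrows_ok n V Dd && row_ok n.+1 (V n.+1) (V n) (Dd n.+1).
Proof. by rewrite /arrows_ok iota1S all_rcons andbC. Qed.

Lemma special_countS n V Dd :
  special_count n.+1 V Dd = (special_count n V Dd + row_special n.+1 (V n.+1) (V n) (Dd n.+1))%N.
Proof.
case: n => [|n]; first by rewrite /special_count /row_special !big_geq.
by rewrite /special_count big_nat_recr.
Qed.

Lemma double_countS n Dd : double_count n.+1 Dd = (double_count n Dd + row_double n.+1 (Dd n.+1))%N.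
Proof. by rewrite /double_count big_nat_recr. Qed.

Lemma r_countS n V : r_count n.+1 V = (r_count n V + row_r n.+1 (V n.+1) (V n))%N.
Proof. by rewrite /r_count big_nat_recr. Qed.

Lemma rows_no_tripleS n V : rows_no_triple n.+1 V = rows_no_triple n V && no_triple n (V n).
Proof. by case: n => [|n] //; rewrite /rows_no_triple iota1S all_rcons andbC. Qed.

Lemma arrowed_weightS n V Dd : arrowed_weight n.+1 V Dd =
  arrowed_weight n V Dd * row_weight n.+1 (V n.+1) (V n) (Dd n.+1).
Proof.
rewrite /arrowed_weight /row_weight arrows_okS special_countS double_countS.
case: arrows_ok; last by rewrite mul0r.
by case: row_ok; rewrite ?mulr0 // -exprD addnACA.
Qed.

Lemma eq_row_weight m Vb Vc Db Db' : Db =1 Db' -> row_weight m Vb Vc Db = row_weight m Vb Vc Db'.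
Proof.
move=> eqD; rewrite /row_weight.
have -> : row_ok m Vb Vc Db = row_ok m Vb Vc Db' by apply: eq_all => j; rewrite !eqD.
have -> : row_special m Vb Vc Db = row_special m Vb Vc Db'.
  by apply: eq_bigr => j _; rewrite !eqD.
have -> : row_double m Db = row_double m Db' by apply: eq_bigr => j _; rewrite eqD.
by [].
Qed.

Lemma eq_arrowed_weight n V Dd Dd' : (forall i, (0 < i <= n)%N -> Dd i =1 Dd' i) ->
  arrowed_weight n V Dd = arrowed_weight n V Dd'.
Proof.
elim: n => [|n IH] eqD; first by rewrite /arrowed_weight /special_count /double_count !big_geq.
rewrite !arrowed_weightS IH => [|i i_range]; last by apply: eqD; lia.
by congr (_ * _); apply/eq_row_weight/eqD; rewrite leqnn.
Qed.

Lemma no_four_equal_of_no_triple n V : interlaced n.+1 V -> rows_no_triple n V ->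
  forall k, (0 < k)%N -> (k.+3 < n.+1)%N -> V n k != V n k.+3.
Proof.
move=> /interlacedP interl no_triples.
have : no_triple n.-1 (V n.-1).
  by case: n no_triples {interl} => [|[|n]] //; rewrite rows_no_tripleS => /andP[].
rewrite no_triple_consecutive => [no_consec k k_gt0 k_lt | j j_range].
  have k_in : k \in iota 1 n.-1.-2 by rewrite mem_iota; lia.
  have := allP no_consec k k_in.
  by have := interl n k; have := interl n k.+1; have := interl n k.+2; lia.
by have := interl n j; have := interl n j.+1; lia.
Qed.

Lemma sum_arrowed_weight n V : interlaced n V ->
  \sum_(D <- tri_arrays all_decos n) arrowed_weight n V (ent nodeco D)
  = if rows_no_triple n V then 2 ^+ r_count n V else 0.
Proof.
elim: n => [|n IH] interl.
  by rewrite big_seq1 /arrowed_weight /special_count /double_count /r_count !big_geq.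
have interl_n : interlaced n V.
  by apply/interlacedP => i j j_range i_le; apply: (interlacedP _ _ interl); lia.
transitivity (\sum_(P <- tri_arrays all_decos n) arrowed_weight n V (ent nodeco P) *
    \sum_(r <- rows_of all_decos n.+1) row_weight n.+1 (V n.+1) (V n) (fun j => nth nodeco r j.-1)).
  rewrite big_tri_arraysS big_seq [RHS]big_seq; apply: eq_bigr => P /size_tri_arrays size_P.
  rewrite big_distrr; apply: eq_bigr => r _; rewrite arrowed_weightS.
  rewrite (eq_arrowed_weight _ (Dd' := ent nodeco P)) => [|i i_range]; last first.
    by apply: ent_rcons; rewrite size_P.
  by congr (_ * _); apply: eq_row_weight; rewrite -size_P; apply: ent_rcons_last.
rewrite -big_distrl IH // rows_no_tripleS r_countS.
case no_triples: (rows_no_triple n V); last by rewrite /= mul0r.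
rewrite sum_row_weight //.
- by rewrite /=; case: no_triple; rewrite ?mulr0 ?exprD.
- by move=> k k_range; apply: (interlacedP _ _ interl); lia.
- exact: no_four_equal_of_no_triple.
Qed.

(** * Entries and decorations *)

Definition zip_rows (S T : Type) (G : seq (seq S)) (D : seq (seq T)) : seq (seq (S * T)) :=
  [seq zip p.1 p.2 | p <- zip G D].

Lemma big_rows_of_pairs (R : nmodType) (S T : Type) (s : seq S) (t : seq T) m
    (F : seq (S * T) -> R) :
  \sum_(r <- rows_of [seq (x, d) | x <- s, d <- t] m) F r =
  \sum_(u <- rows_of s m) \sum_(w <- rows_of t m) F (zip u w).
Proof.
elim: m F => [|m IH] F; first by rewrite /= !big_seq1.
rewrite big_rows_ofS big_allpairs big_rows_ofS; apply: eq_bigr => x _.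
under eq_bigr do rewrite IH.
by rewrite exchange_big; apply: eq_bigr => u _; rewrite big_rows_ofS.
Qed.

Lemma big_tri_arrays_pairs (R : nmodType) (S T : eqType) (s : seq S) (t : seq T) n
    (F : seq (seq (S * T)) -> R) :
  \sum_(A <- tri_arrays [seq (x, d) | x <- s, d <- t] n) F A =
  \sum_(G <- tri_arrays s n) \sum_(D <- tri_arrays t n) F (zip_rows G D).
Proof.
elim: n F => [|n IH] F; first by rewrite /= !big_seq1.
rewrite big_tri_arraysS IH big_tri_arraysS big_seq [RHS]big_seq; apply: eq_bigr => G.
move=> /size_tri_arrays size_G; rewrite [RHS]exchange_big big_tri_arraysS.
rewrite big_seq [RHS]big_seq; apply: eq_bigr => D /size_tri_arrays size_D.
rewrite big_rows_of_pairs exchange_big; apply: eq_bigr => u _; apply: eq_bigr => w _.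
by rewrite /zip_rows zip_rcons ?size_G ?size_D // map_rcons.
Qed.

Section ZipRows.

Variables (G : seq (seq int)) (D : seq (seq deco)).
Hypothesis size_GD : size G = size D.
Hypothesis size_rows_GD : forall i, size (nth [::] G i) = size (nth [::] D i).

Lemma nth_zip_rows i : nth [::] (zip_rows G D) i = zip (nth [::] G i) (nth [::] D i).
Proof.
rewrite /zip_rows; case: (ltnP i (size G)) => i_lt.
  by rewrite (nth_map ([::], [::])) ?nth_zip // size_zip size_GD minnn -size_GD.
by rewrite !nth_default ?size_map ?size_zip ?size_GD ?minnn -?size_GD.
Qed.

Lemma vals_zip_rows : vals (zip_rows G D) = G.
Proof.
apply: (@eq_from_nth _ [::]); first by rewrite !size_map size_zip size_GD minnn.
move=> i i_lt; rewrite /vals (nth_map [::]) -?(size_map (map fst)) // nth_zip_rows.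
by rewrite -/(unzip1 _) unzip1_zip // size_rows_GD.
Qed.

Lemma dec_zip_rows i : dec (zip_rows G D) i =1 ent nodeco D i.
Proof. by move=> j; rewrite /dec /ent nth_zip_rows nth_zip. Qed.

Lemma tri_shape_zip_rows n : tri_shape n (zip_rows G D) = tri_shape n G.
Proof.
rewrite /tri_shape size_map size_zip size_GD minnn -size_GD; congr andb.
by apply: eq_all => i; rewrite nth_zip_rows size_zip size_rows_GD minnn.
Qed.

End ZipRows.

Lemma arrowed_summandE n k G D : size G = size D ->
    (forall i, size (nth [::] G i) = size (nth [::] D i)) ->
  (if is_arrowed_GT n k (zip_rows G D)
   then (-1) ^+ (n_special n (zip_rows G D) + n_double n (zip_rows G D)) else 0)
  = if is_GT n k G then arrowed_weight n (ent 0 G) (ent nodeco D) else 0.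
Proof.
move=> size_GD size_rows_GD; set A := zip_rows G D.
have -> : (if is_arrowed_GT n k A then (-1) ^+ (n_special n A + n_double n A) else 0) =
    if tri_shape n A && is_GT n k (vals A) then arrowed_weight n (Defs.val A) (dec A) else 0.
  by rewrite /is_arrowed_GT /arrowed_weight; case: tri_shape; case: is_GT.
have -> : Defs.val A = ent 0 G by rewrite /Defs.val vals_zip_rows.
rewrite tri_shape_zip_rows // vals_zip_rows //.
case GT: (is_GT n k G); last by rewrite andbF.
have -> : tri_shape n G by case/and3P: GT.
by apply: eq_arrowed_weight => i _; apply: dec_zip_rows.
Qed.

Theorem proposition2p1 (n : nat) (k : seq int) :
  (1 <= n)%N -> size k = n -> sorted <=%R k ->
  \sum_(A <- AGT_candidates n k | is_arrowed_GT n k A)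
     (-1) ^+ (n_special n A + n_double n A)
  = \sum_(G <- GT_candidates n k | is_GT n k G && no_three_equal n G)
     (2 : int) ^+ r_stat n G.
Proof.
(* The identity holds pattern by pattern for each candidate array of entries. *)
move=> _ _ _.
rewrite big_mkcond [RHS]big_mkcond /AGT_candidates big_tri_arrays_pairs /GT_candidates.
rewrite big_seq [RHS]big_seq; apply: eq_bigr => G G_in.
transitivity (\sum_(D <- tri_arrays all_decos n)
                if is_GT n k G then arrowed_weight n (ent 0 G) (ent nodeco D) else 0).
  rewrite big_seq [RHS]big_seq; apply: eq_bigr => D D_in; apply: arrowed_summandE.
  - by rewrite (size_tri_arrays G_in) (size_tri_arrays D_in).
  - by move=> i; rewrite (size_nth_tri_arrays G_in) (size_nth_tri_arrays D_in).
case GT: (is_GT n k G); last by rewrite big1.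
by rewrite sum_arrowed_weight //; case/and3P: GT.
Qed.
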